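(* For all $n\ge2$, each of the four sets $S_n(I,J)$, $S_n(K,J)$, $S_n(J,I)$, $S_n(J,K)$ is mapped into itself by $T_3$.
   Context: A twisted $n$-gon is a map $P:\mathbb{Z}\to\mathbb{RP}^2$ with every three consecutive points non-collinear and $P_{i+n}=M(P_i)$ for a fixed $M\in\mathrm{PGL}_3(\mathbb{R})$; $\mathcal{P}_n$ is the set of classes modulo projective equivalence. $P$ is $3$-nice if $P_i,P_{i+1},P_{i+3},P_{i+4}$ are in general position for all $i$. $T_3(P)=P'$ with $P'_i=P_iP_{i+3}\cap P_{i+1}P_{i+4}$ (lines through the indicated points); it acts on classes of $3$-nice twisted $n$-gons. Inverse cross ratio: for four collinear points $A,B,C,D$, map their line projectively to the $x$-axis with coordinates $a,b,c,d$ and set $\chi(A,B,C,D)=\frac{(a-b)(c-d)}{(a-c)(b-d)}$ (value in $\mathbb{R}\cup\{\infty\}$, projectively invariant). Corner invariants: $x_{2i}=\chi(P_{i-2},P_{i-1},P_{i-2}P_{i-1}\cap P_iP_{i+1},P_{i-2}P_{i-1}\cap P_{i+1}P_{i+2})$ and $x_{2i+1}=\chi(P_{i+2},P_{i+1},P_{i+2}P_{i+1}\cap P_iP_{i-1},P_{i+2}P_{i+1}\cap P_{i-1}P_{i-2})$, with $x_{j+2n}=x_j$. Let $I=(-\infty,0)$, $J=(0,1)$, $K=(1,\infty)$. $S_n(I,J)$ is the set of $[P]\in\mathcal{P}_n$ whose corner invariants satisfy $(x_{2i},x_{2i+1})\in I\times J$ for all $i$; $S_n(K,J)$, $S_n(J,I)$,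 $S_n(J,K)$ are defined in the same way with $K\times J$, $J\times I$, $J\times K$. (Elements of these sets are automatically $3$-nice.) *)

From HB Require Import structures.
From mathcomp Require Import all_boot all_order all_algebra.
From mathcomp Require Import reals.
Set Implicit Arguments. Unset Strict Implicit. Unset Printing Implicit Defensive.
Import Order.TTheory GRing.Theory Num.Theory.
Local Open Scope ring_scope.

Section Defs.
Variable R : realType.

(* Points of RP^2 (and lines of the dual plane) are represented by homogeneous
   coordinate row vectors in R^3; a genuine point is a nonzero vector. *)
Notation vec := 'rV[R]_3.

Definition c0 : 'I_3 := @Ordinal 3 0 isT.
Definition c1 : 'I_3 := @Ordinal 3 1 isT.
Definition c2 : 'I_3 := @Ordinal 3 2 isT.

Definition cross (u v : vec) : vec :=
  \row_(k < 3) [:: u 0 c1 * v 0 c2 - u 0 c2 * v 0 c1;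
                   u 0 c2 * v 0 c0 - u 0 c0 * v 0 c2;
                   u 0 c0 * v 0 c1 - u 0 c1 * v 0 c0]`_k.

Definition dot (u v : vec) : R := \sum_(k < 3) u 0 k * v 0 k.

Definition line (X Y : vec) : vec := cross X Y.
Definition meet (L1 L2 : vec) : vec := cross L1 L2.

Definition det3 (u v w : vec) : R :=
  \det (\matrix_(i < 3, j < 3) [:: u 0 j; v 0 j; w 0 j]`_i).

Definition noncollinear (u v w : vec) : Prop := det3 u v w != 0.

(* Inverse cross ratio chi(A,B,C,D) = (a-b)(c-d)/((a-c)(b-d)) of four
   collinear points.  In homogeneous coordinates on the line, (a - b) is
   [A,B]/(t_A t_B) with [A,B] the 2x2 bracket, so chi = [A,B][C,D]/([A,C][B,D]);
   for collinear A,B,C,D one has cross X Y = [X,Y] n for a fixed normal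
   vector n, hence chi = <AxB, CxD> / <AxC, BxD>.  We record it as a
   numerator/denominator pair (a point of R u {oo}). *)
Definition chi_num (A B C D : vec) : R := dot (cross A B) (cross C D).
Definition chi_den (A B C D : vec) : R := dot (cross A C) (cross B D).

Definition chi_in (X : interval R) (A B C D : vec) : Prop :=
  chi_den A B C D != 0 /\ chi_num A B C D / chi_den A B C D \in X.

Definition twisted_ngon (n : nat) (M : 'M[R]_3) (P : int -> vec) : Prop :=
  M \in unitmx /\
  (forall i : int, noncollinear (P i) (P (i + 1)) (P (i + 2))) /\
  (forall i : int, exists c : R, c != 0 /\ P (i + n%:Z) = c *: (P i *m M)).

Definition three_nice (P : int -> vec) : Prop :=
  forall i : int,
    [/\ noncollinear (P i) (P (i + 1)) (P (i + 3)),
        noncollinear (P i) (P (i + 1)) (P (i + 4)),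
        noncollinear (P i) (P (i + 3)) (P (i + 4)) &
        noncollinear (P (i + 1)) (P (i + 3)) (P (i + 4))].

Definition T3 (P : int -> vec) : int -> vec :=
  fun i => meet (line (P i) (P (i + 3))) (line (P (i + 1)) (P (i + 4))).

(* Corner invariants x_{2i} and x_{2i+1}: "x_{2i} in X" and "x_{2i+1} in X". *)
Definition x_even_in (X : interval R) (P : int -> vec) (i : int) : Prop :=
  chi_in X (P (i - 2)) (P (i - 1))
    (meet (line (P (i - 2)) (P (i - 1))) (line (P i) (P (i + 1))))
    (meet (line (P (i - 2)) (P (i - 1))) (line (P (i + 1)) (P (i + 2)))).

Definition x_odd_in (X : interval R) (P : int -> vec) (i : int) : Prop :=
  chi_in X (P (i + 2)) (P (i + 1))
    (meet (line (P (i + 2)) (P (i + 1))) (line (P i) (P (i - 1))))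
    (meet (line (P (i + 2)) (P (i + 1))) (line (P (i - 1)) (P (i - 2)))).

Definition Iint : interval R := `]-oo, 0[.
Definition Jint : interval R := `]0, 1[.
Definition Kint : interval R := `]1, +oo[.

(* [P] \in S_n(X,Y) for a representative P of the class. *)
Definition in_S (n : nat) (X Y : interval R) (P : int -> vec) : Prop :=
  (exists M : 'M[R]_3, twisted_ngon n M P) /\
  (forall i : int, x_even_in X P i /\ x_odd_in Y P i).

(* T_3 maps S_n(X,Y) into itself (on representatives, the corner
   invariants being projective invariants). *)
Definition T3_preserves (n : nat) (X Y : interval R) : Prop :=
  forall (M : 'M[R]_3) (P : int -> vec),
    twisted_ngon n M P -> in_S n X Y P ->
    three_nice P /\ twisted_ngon n M (T3 P) /\ in_S n X Y (T3 P).

End Defs.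

From mathcomp Require Import all_boot all_order all_algebra.
From mathcomp Require Import reals.
From mathcomp Require Import ring lra zify.
From Stdlib Require Import Lia.
Set Implicit Arguments. Unset Strict Implicit. Unset Printing Implicit Defensive.
Import Order.TTheory GRing.Theory Num.Theory.
Local Open Scope ring_scope.

(* Lift the polygon to R^3 and rescale the lifts so that consecutive triples have
   determinant 1.  Then p_(m+3) = a_m p_(m+2) + b_m p_(m+1) + p_m, and the corner
   invariants are x_k = a_k / (b_k b_(k+1)) and y_k = - b_(k+1) / (a_k a_(k+1)).
   In the frame (p_0, p_1, p_2) the determinants of triples of vertices of T_3(P)
   factor into a_k, b_k, G_k = 1 - x_k - y_(k+1) and
   H_k = (1 - x_k)(1 - y_(k+2)) - x_(k+1) y_(k+1), which gives the corner invariants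
   x_1 G_0 / H_0 and y_3 G_3 / H_2 of T_3(P).  As
   H_k = x_(k+1) G_k + (1 - x_k) G_(k+1) = y_(k+1) G_(k+1) + (1 - y_(k+2)) G_k,
   both have the form u / (u + v) where the signs of u and v are fixed by the two
   intervals, and this puts them back into the same intervals. *)

Section Row3.
Variable R : realType.
Notation vec := 'rV[R]_3.

Definition row3 (x y z : R) : vec := \row_(k < 3) [:: x; y; z]`_k.

Lemma row3_ind (P : vec -> Prop) : (forall x y z, P (row3 x y z)) -> forall u, P u.
Proof.
move=> HP u; have -> : u = row3 (u 0 c0) (u 0 c1) (u 0 c2); last exact: HP.
by apply/rowP => -[[|[|[|k]]] Hk]; rewrite mxE //=; congr (u 0 _); apply/val_inj.
Qed.

Lemma row3_congr x y z x' y' z' :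
  x = x' -> y = y' -> z = z' -> row3 x y z = row3 x' y' z'.
Proof. by move=> -> -> ->. Qed.

Lemma row3_0 x y z : row3 x y z 0 c0 = x. Proof. by rewrite mxE. Qed.
Lemma row3_1 x y z : row3 x y z 0 c1 = y. Proof. by rewrite mxE. Qed.
Lemma row3_2 x y z : row3 x y z 0 c2 = z. Proof. by rewrite mxE. Qed.

Lemma add_row3 x y z x' y' z' :
  row3 x y z + row3 x' y' z' = row3 (x + x') (y + y') (z + z').
Proof. by apply/rowP => -[[|[|[|k]]] Hk]; rewrite !mxE //= addr0. Qed.

Lemma opp_row3 x y z : - row3 x y z = row3 (- x) (- y) (- z).
Proof. by apply/rowP => -[[|[|[|k]]] Hk]; rewrite !mxE //= oppr0. Qed.

Lemma scale_row3 c x y z : c *: row3 x y z = row3 (c * x) (c * y) (c * z).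
Proof. by apply/rowP => -[[|[|[|k]]] Hk]; rewrite !mxE //= mulr0. Qed.

Lemma cross_row3 x y z x' y' z' : cross (row3 x y z) (row3 x' y' z') =
  row3 (y * z' - z * y') (z * x' - x * z') (x * y' - y * x').
Proof. by apply/rowP => k; rewrite !mxE. Qed.

Lemma dot_row3 x y z x' y' z' :
  dot (row3 x y z) (row3 x' y' z') = x * x' + y * y' + z * z'.
Proof. by rewrite /dot !big_ord_recl big_ord0 !mxE /= addr0 addrA. Qed.

Lemma det3_row3 x1 y1 z1 x2 y2 z2 x3 y3 z3 :
  det3 (row3 x1 y1 z1) (row3 x2 y2 z2) (row3 x3 y3 z3) =
  x1 * (y2 * z3 - z2 * y3) - y1 * (x2 * z3 - z2 * x3) + z1 * (x2 * y3 - y2 * x3).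
Proof.
rewrite /det3 (expand_det_row _ 0) !big_ord_recl big_ord0 /cofactor.
rewrite !(expand_det_row _ 0) !big_ord_recl !big_ord0 /cofactor !det_mx11.
by rewrite !mxE /=; ring.
Qed.

Lemma mulmx_row3 x y z (M : 'M[R]_3) :
  row3 x y z *m M = row3 (x * M c0 c0 + y * M c1 c0 + z * M c2 c0)
                         (x * M c0 c1 + y * M c1 c1 + z * M c2 c1)
                         (x * M c0 c2 + y * M c1 c2 + z * M c2 c2).
Proof.
apply/rowP => k; rewrite !mxE !big_ord_recl big_ord0 !mxE /= addr0 addrA.
by case: k => [[|[|[|k]]] Hk] //=; congr (_ * M _ _ + _ * M _ _ + _ * M _ _);
  apply/val_inj.
Qed.

End Row3.

Ltac row3_coords :=
  repeat match goal with u : matrix _ 1 3 |- _ => move: u; apply: row3_ind => ? ? ? end.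

Ltac row3_simpl := repeat progress rewrite ?cross_row3 ?dot_row3 ?det3_row3 ?mulmx_row3
  ?scale_row3 ?opp_row3 ?add_row3 ?row3_0 ?row3_1 ?row3_2.

Ltac row3_ring := row3_coords; row3_simpl; try apply: row3_congr; ring.

Section Geometry.
Variable R : realType.
Notation vec := 'rV[R]_3.

Lemma det3_rotl (u v w : vec) : det3 v w u = det3 u v w.
Proof. row3_ring. Qed.

Lemma det3_rev (u v w : vec) : det3 w v u = - det3 u v w.
Proof. row3_ring. Qed.

Lemma det3_swap23 (u v w : vec) : det3 u w v = - det3 u v w.
Proof. row3_ring. Qed.

Lemma det3Z x y z (u v w : vec) :
  det3 (x *: u) (y *: v) (z *: w) = x * y * z * det3 u v w.
Proof. row3_ring. Qed.

Lemma crossZ x y (u v : vec) : cross (x *: u) (y *: v) = (x * y) *: cross u v.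
Proof. row3_ring. Qed.

Lemma det3_dot_cross (u v w : vec) : det3 u v w = dot (cross u v) w.
Proof. row3_ring. Qed.

Lemma det3_cramer (u v w z : vec) :
  det3 u v w *: z = det3 z v w *: u + det3 u z w *: v + det3 u v z *: w.
Proof. row3_ring. Qed.

Lemma meet_lineE (A B C D : vec) :
  meet (line A B) (line C D) = det3 A B D *: C - det3 A B C *: D.
Proof. rewrite /meet /line; row3_ring. Qed.

Lemma meet_lineZ x y z w (A B C D : vec) :
  meet (line (x *: A) (y *: B)) (line (z *: C) (w *: D)) =
  (x * y * (z * w)) *: meet (line A B) (line C D).
Proof. by rewrite /meet /line !crossZ. Qed.

Lemma det_row3 (M : 'M[R]_3) : \det M =
  det3 (row3 (M c0 c0) (M c0 c1) (M c0 c2)) (row3 (M c1 c0) (M c1 c1) (M c1 c2))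
       (row3 (M c2 c0) (M c2 c1) (M c2 c2)).
Proof.
rewrite /det3; congr (\det _); apply/matrixP => -[[|[|[|i]]] Hi] j; rewrite !mxE //=;
  by case: j => [[|[|[|j]]] Hj] //=; congr (M _ _); apply/val_inj.
Qed.

Lemma meet_line_mulmx (M : 'M[R]_3) (A B C D : vec) :
  meet (line (A *m M) (B *m M)) (line (C *m M) (D *m M)) =
  \det M *: (meet (line A B) (line C D) *m M).
Proof. rewrite det_row3 /meet /line; row3_ring. Qed.

Lemma dot_self_neq0 (u w : vec) : dot u w != 0 -> dot u u != 0.
Proof.
elim/row3_ind: u => x y z; elim/row3_ind: w => x' y' z'; rewrite !dot_row3.
apply: contra_neq => sum_sq0.
have sq0 (t : R) : t * t = 0 -> t = 0 by move/eqP; rewrite mulf_eq0 orbb => /eqP.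
have x0 : x = 0 by apply: sq0; nra.
have y0 : y = 0 by apply: sq0; nra.
have z0 : z = 0 by apply: sq0; nra.
by rewrite x0 y0 z0; ring.
Qed.

Lemma divMMl (k x y : R) : k != 0 -> k * x / (k * y) = x / y.
Proof. by move=> hk; rewrite invfM mulrACA mulfV // mul1r. Qed.

Definition corner_in (X : interval R) (A B C D E : vec) : Prop :=
  chi_in X A B (meet (line A B) (line C D)) (meet (line A B) (line D E)).

Definition corner_ratio (A B C D E : vec) : R :=
  det3 A B D * det3 C D E / (det3 A C D * det3 B D E).

Definition corner_ratio_in (X : interval R) (A B C D E : vec) : Prop :=
  [/\ det3 A B D != 0, det3 A C D * det3 B D E != 0 & corner_ratio A B C D E \in X].

Lemma chi_num_corner (A B C D E : vec) :
  chi_num A B (meet (line A B) (line C D)) (meet (line A B) (line D E)) =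
  dot (cross A B) (cross A B) * (det3 A B D * det3 C D E).
Proof. rewrite /chi_num !meet_lineE; row3_ring. Qed.

Lemma chi_den_corner (A B C D E : vec) :
  chi_den A B (meet (line A B) (line C D)) (meet (line A B) (line D E)) =
  dot (cross A B) (cross A B) * (det3 A C D * det3 B D E).
Proof. rewrite /chi_den !meet_lineE; row3_ring. Qed.

Lemma corner_inE X (A B C D E : vec) : 0 \notin X ->
  corner_in X A B C D E <-> corner_ratio_in X A B C D E.
Proof.
move=> X0; rewrite /corner_in /chi_in chi_num_corner chi_den_corner.
split => [[hden hin] | [hABD hden hin]].
- have hAB : dot (cross A B) (cross A B) != 0.
    by apply: contraNneq hden => ->; rewrite mul0r.
  rewrite divMMl // in hin.
  split => //; last by rewrite mulf_eq0 (negbTE hAB) in hden.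
  apply: contraNneq X0 => hABD.
  by rewrite -(_ : corner_ratio A B C D E = 0) // /corner_ratio hABD !mul0r.
- have hAB : dot (cross A B) (cross A B) != 0.
    by apply: (@dot_self_neq0 _ D); rewrite -det3_dot_cross.
  by rewrite divMMl // mulf_neq0.
Qed.

Lemma corner_ratio_inZ X (x0 x1 x2 x3 x4 : R) (A B C D E : vec) :
  x0 != 0 -> x1 != 0 -> x2 != 0 -> x3 != 0 -> x4 != 0 ->
  corner_ratio_in X (x0 *: A) (x1 *: B) (x2 *: C) (x3 *: D) (x4 *: E) <->
  corner_ratio_in X A B C D E.
Proof.
move=> h0 h1 h2 h3 h4.
have k1 : x0 * x1 * x3 != 0 by rewrite !mulf_neq0.
have k2 : x0 * x2 * x3 * (x1 * x3 * x4) != 0 by rewrite !mulf_neq0.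
have eden : x0 * x2 * x3 * det3 A C D * (x1 * x3 * x4 * det3 B D E) =
   x0 * x2 * x3 * (x1 * x3 * x4) * (det3 A C D * det3 B D E) by ring.
have eratio : corner_ratio (x0 *: A) (x1 *: B) (x2 *: C) (x3 *: D) (x4 *: E) =
    corner_ratio A B C D E.
  have k3 : x0 * x1 * x3 * (x2 * x3 * x4) != 0 by rewrite !mulf_neq0.
  by rewrite /corner_ratio !det3Z -[RHS](divMMl _ _ k3); congr (_ / _); ring.
have nz (k x : R) : k != 0 -> (k * x != 0) = (x != 0).
  by move=> hk; rewrite mulf_eq0 (negbTE hk).
by rewrite /corner_ratio_in eratio !det3Z eden (nz _ _ k1) (nz _ _ k2).
Qed.

Lemma det3_mulmx (M : 'M[R]_3) (u v w : vec) :
  det3 (u *m M) (v *m M) (w *m M) = det3 u v w * \det M.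
Proof. rewrite det_row3; row3_ring. Qed.

Definition frame (u v w : vec) : 'M[R]_3 :=
  \matrix_(i < 3, j < 3) [:: u 0 j; v 0 j; w 0 j]`_i.

Lemma row3_mulmx_frame x y z (u v w : vec) :
  row3 x y z *m frame u v w = x *: u + y *: v + z *: w.
Proof. rewrite mulmx_row3 !mxE /=; row3_ring. Qed.

End Geometry.

Section Recurrence.
Variable R : realType.
Notation vec := 'rV[R]_3.
Variables a b : nat -> R.

Fixpoint rec_seq (m : nat) : vec :=
  match m with
  | 0 => row3 1 0 0
  | 1 => row3 0 1 0
  | 2 => row3 0 0 1
  | (((m'.+1 as m1).+1) as m2).+1 => a m' *: rec_seq m2 + b m' *: rec_seq m1 + rec_seq m'
  end.

Lemma rec_seqS m : rec_seq m.+3 = a m *: rec_seq m.+2 + b m *: rec_seq m.+1 + rec_seq m.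
Proof. by []. Qed.

Definition rec_T3 (m : nat) : vec :=
  meet (line (rec_seq m) (rec_seq m.+3)) (line (rec_seq m.+1) (rec_seq m.+4)).

Definition Gpoly k :=
  b k * b k.+1 * a k.+1 * a k.+2 - a k * a k.+1 * a k.+2 + b k * b k.+1 * b k.+2.
Definition Hpoly k := (b k * b k.+1 - a k) * (a k.+2 * a k.+3 + b k.+3) + b k * a k.+3.

Ltac rec_T3_ring := rewrite /rec_T3 !meet_lineE !rec_seqS /Gpoly /Hpoly; row3_simpl; ring.

Lemma det3_rec_T3_012 : det3 (rec_T3 0) (rec_T3 1) (rec_T3 2) = Gpoly 0 * Gpoly 1.
Proof. rec_T3_ring. Qed.

Lemma det3_rec_T3_234 : det3 (rec_T3 2) (rec_T3 3) (rec_T3 4) = Gpoly 2 * Gpoly 3.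
Proof. rec_T3_ring. Qed.

Lemma det3_rec_T3_013 : det3 (rec_T3 0) (rec_T3 1) (rec_T3 3) = a 3 * Gpoly 0 * Hpoly 1.
Proof. rec_T3_ring. Qed.

Lemma det3_rec_T3_023 : det3 (rec_T3 0) (rec_T3 2) (rec_T3 3) = - b 1 * Gpoly 2 * Hpoly 0.
Proof. rec_T3_ring. Qed.

Lemma det3_rec_T3_124 : det3 (rec_T3 1) (rec_T3 2) (rec_T3 4) = a 4 * Gpoly 1 * Hpoly 2.
Proof. rec_T3_ring. Qed.

Lemma det3_rec_T3_134 : det3 (rec_T3 1) (rec_T3 3) (rec_T3 4) = - b 2 * Gpoly 3 * Hpoly 1.
Proof. rec_T3_ring. Qed.

Lemma det3_rec_seq_014 : det3 (rec_seq 0) (rec_seq 1) (rec_seq 4) = a 0 * a 1 + b 1.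
Proof. rewrite !rec_seqS; row3_simpl; ring. Qed.

Lemma det3_rec_seq_034 : det3 (rec_seq 0) (rec_seq 3) (rec_seq 4) = b 0 * b 1 - a 0.
Proof. rewrite !rec_seqS; row3_simpl; ring. Qed.

End Recurrence.

Section CornerAlgebra.
Variable R : realType.

Definition x_of (a b : nat -> R) k := a k / (b k * b k.+1).
Definition y_of (a b : nat -> R) k := - b k.+1 / (a k * a k.+1).

Definition Gxy (x y : nat -> R) k := 1 - x k - y k.+1.
Definition Hxy (x y : nat -> R) k := (1 - x k) * (1 - y k.+2) - x k.+1 * y k.+1.

(* If [x k] and [y k] are the even and odd corner invariants of a polygon at its
   vertex k+2, then [T3x x y] and [T3y x y] are those of its T_3-image at vertex 2. *)
Definition T3x (x y : nat -> R) := x 1 * Gxy x y 0 / Hxy x y 0.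
Definition T3y (x y : nat -> R) := y 3 * Gxy x y 3 / Hxy x y 2.

Variables a b : nat -> R.
Hypothesis a_neq0 : forall k, a k != 0.
Hypothesis b_neq0 : forall k, b k != 0.
Let x := x_of a b.
Let y := y_of a b.

Lemma Gpoly_xy k :
  Gpoly a b k = Gxy x y k * (b k * b k.+1 * a k.+1 * a k.+2).
Proof. rewrite /Gpoly /Gxy /x /y /x_of /y_of; field; by rewrite !a_neq0 !b_neq0. Qed.

Lemma Hpoly_xy k :
  Hpoly a b k = Hxy x y k * (b k * b k.+1 * a k.+2 * a k.+3).
Proof. rewrite /Hpoly /Hxy /x /y /x_of /y_of; field; by rewrite !a_neq0 !b_neq0. Qed.

Hypothesis G_neq0 : forall k, Gxy x y k != 0.
Hypothesis H_neq0 : forall k, Hxy x y k != 0.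

Lemma Gpoly_neq0 k : Gpoly a b k != 0.
Proof. by rewrite Gpoly_xy !mulf_neq0. Qed.

Lemma Hpoly_neq0 k : Hpoly a b k != 0.
Proof. by rewrite Hpoly_xy !mulf_neq0. Qed.

Lemma det3_rec_T3_012_neq0 : det3 (rec_T3 a b 0) (rec_T3 a b 1) (rec_T3 a b 2) != 0.
Proof. by rewrite det3_rec_T3_012 mulf_neq0 ?Gpoly_neq0. Qed.

Lemma corner_ratio_in_rec_T3_x X : T3x x y \in X ->
  corner_ratio_in X (rec_T3 a b 0) (rec_T3 a b 1) (rec_T3 a b 2) (rec_T3 a b 3) (rec_T3 a b 4).
Proof.
rewrite /corner_ratio_in /corner_ratio det3_rec_T3_013 det3_rec_T3_234 det3_rec_T3_023.
rewrite det3_rec_T3_134 => hX; split.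
- by rewrite !mulf_neq0 ?Gpoly_neq0 ?Hpoly_neq0.
- by rewrite !mulf_neq0 ?oppr_eq0 ?Gpoly_neq0 ?Hpoly_neq0.
rewrite (_ : _ / _ = T3x x y) // /T3x (_ : x 1 = a 1 / (b 1 * b 2)) // !Gpoly_xy !Hpoly_xy.
move: (G_neq0 0) (G_neq0 2) (G_neq0 3) (H_neq0 0) (H_neq0 1).
move: (Gxy x y 0) (Gxy x y 2) (Gxy x y 3) (Hxy x y 0) (Hxy x y 1).
move=> g0 g2 g3 h0 h1 hg0 hg2 hg3 hh0 hh1.
field; by rewrite ?hg0 ?hg2 ?hg3 ?hh0 ?hh1 !a_neq0 !b_neq0.
Qed.

Lemma corner_ratio_in_rec_T3_y Y : T3y x y \in Y ->
  corner_ratio_in Y (rec_T3 a b 4) (rec_T3 a b 3) (rec_T3 a b 2) (rec_T3 a b 1) (rec_T3 a b 0).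
Proof.
rewrite /corner_ratio_in /corner_ratio.
rewrite [det3 (rec_T3 a b 4) (rec_T3 a b 3) _]det3_rev [det3 (rec_T3 a b 4) _ _]det3_rev.
rewrite [det3 (rec_T3 a b 3) _ _]det3_rev [det3 (rec_T3 a b 2) _ _]det3_rev.
rewrite det3_rec_T3_134 det3_rec_T3_012 det3_rec_T3_124 det3_rec_T3_013 => hY; split.
- by rewrite oppr_eq0 !mulf_neq0 ?oppr_eq0 ?Gpoly_neq0 ?Hpoly_neq0.
- by rewrite mulrNN !mulf_neq0 ?Gpoly_neq0 ?Hpoly_neq0.
rewrite (_ : _ / _ = T3y x y) // /T3y (_ : y 3 = - b 4 / (a 3 * a 4)) // !Gpoly_xy !Hpoly_xy.
move: (G_neq0 0) (G_neq0 1) (G_neq0 3) (H_neq0 1) (H_neq0 2).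
move: (Gxy x y 0) (Gxy x y 1) (Gxy x y 3) (Hxy x y 1) (Hxy x y 2).
move=> g0 g1 g3 h1 h2 hg0 hg1 hg3 hh1 hh2.
field; by rewrite ?hg0 ?hg1 ?hg3 ?hh1 ?hh2 !a_neq0 !b_neq0.
Qed.

End CornerAlgebra.

Definition consec_det (R : realType) (p : nat -> 'rV[R]_3) (m : nat) : R :=
  det3 (p m) (p m.+1) (p m.+2).
Definition rec_a (R : realType) (p : nat -> 'rV[R]_3) (m : nat) : R :=
  det3 (p m) (p m.+1) (p m.+3).
Definition rec_b (R : realType) (p : nat -> 'rV[R]_3) (m : nat) : R :=
  - det3 (p m) (p m.+2) (p m.+3).

(* The conditions [x 0 != 1] and [y 0 != 1] make the polygon itself 3-nice. *)
Definition T3_admissible (R : realType) (X Y : interval R) : Prop :=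
  [/\ 0 \notin X, 0 \notin Y & forall x y : nat -> R,
    (forall k, x k \in X) -> (forall k, y k \in Y) ->
    [/\ x 0 != 1, y 0 != 1, forall k, Gxy x y k != 0, forall k, Hxy x y k != 0 &
        T3x x y \in X /\ T3y x y \in Y]].

Section Unimodular.
Variable R : realType.
Notation vec := 'rV[R]_3.
Variable p : nat -> vec.
Hypothesis p_unimodular : forall m, consec_det p m = 1.
Let a := rec_a p.
Let b := rec_b p.
Let F := frame (p 0) (p 1) (p 2).
Let q m := meet (line (p m) (p m.+3)) (line (p m.+1) (p m.+4)).

Lemma rec_unimodular m : p m.+3 = a m *: p m.+2 + b m *: p m.+1 + p m.
Proof.
have e3 : det3 (p m.+3) (p m.+1) (p m.+2) = 1 by rewrite -det3_rotl; exact: p_unimodular.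
have := det3_cramer (p m) (p m.+1) (p m.+2) (p m.+3).
rewrite [det3 (p m) _ _]p_unimodular e3 det3_swap23 !scale1r => ->.
by rewrite /a /b /rec_a /rec_b addrC [p m + _]addrC addrA.
Qed.

Lemma det_frame_unimodular : \det F = 1.
Proof. exact: p_unimodular. Qed.

Lemma unimodular_frame m : p m = rec_seq a b m *m F.
Proof.
suff [] : [/\ p m = rec_seq a b m *m F, p m.+1 = rec_seq a b m.+1 *m F &
             p m.+2 = rec_seq a b m.+2 *m F] by [].
elim: m => [|m [IH0 IH1 IH2]].
  by rewrite /= !row3_mulmx_frame !scale1r !scale0r ?addr0 ?add0r.
split => //.
by rewrite rec_unimodular rec_seqS !mulmxDl -!scalemxAl -IH0 -IH1 -IH2.
Qed.

Lemma det3_unimodular i j k :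
  det3 (p i) (p j) (p k) = det3 (rec_seq a b i) (rec_seq a b j) (rec_seq a b k).
Proof.
rewrite (unimodular_frame i) (unimodular_frame j) (unimodular_frame k).
by rewrite det3_mulmx det_frame_unimodular mulr1.
Qed.

Lemma T3_unimodular m : q m = rec_T3 a b m *m F.
Proof.
rewrite /q (unimodular_frame m) (unimodular_frame m.+1) (unimodular_frame m.+3).
by rewrite (unimodular_frame m.+4) meet_line_mulmx det_frame_unimodular scale1r.
Qed.

Lemma det3_T3_unimodular i j k :
  det3 (q i) (q j) (q k) = det3 (rec_T3 a b i) (rec_T3 a b j) (rec_T3 a b k).
Proof. by rewrite !T3_unimodular det3_mulmx det_frame_unimodular mulr1. Qed.

Lemma corner_ratio_in_T3_unimodular X i j k l m :
  corner_ratio_in X (q i) (q j) (q k) (q l) (q m) <->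
  corner_ratio_in X (rec_T3 a b i) (rec_T3 a b j) (rec_T3 a b k) (rec_T3 a b l) (rec_T3 a b m).
Proof. by rewrite /corner_ratio_in /corner_ratio !det3_T3_unimodular. Qed.

Lemma corner_ratio_in_unimodular_x X k :
  corner_ratio_in X (p k) (p k.+1) (p k.+2) (p k.+3) (p k.+4) <->
  [/\ a k != 0, b k * b k.+1 != 0 & x_of a b k \in X].
Proof.
have eACD : det3 (p k) (p k.+2) (p k.+3) = - b k by rewrite opprK.
have eBDE : det3 (p k.+1) (p k.+3) (p k.+4) = - b k.+1 by rewrite opprK.
rewrite /corner_ratio_in /corner_ratio eACD eBDE [det3 (p k.+2) _ _]p_unimodular.
by rewrite mulrNN mulr1.
Qed.

Lemma corner_ratio_in_unimodular_y Y k :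
  corner_ratio_in Y (p k.+4) (p k.+3) (p k.+2) (p k.+1) (p k) <->
  [/\ b k.+1 != 0, a k * a k.+1 != 0 & y_of a b k \in Y].
Proof.
have eABD : det3 (p k.+4) (p k.+3) (p k.+1) = b k.+1 by rewrite det3_rev.
have eCDE : det3 (p k.+2) (p k.+1) (p k) = - 1 by rewrite det3_rev [det3 _ _ _]p_unimodular.
have eACD : det3 (p k.+4) (p k.+2) (p k.+1) = - a k.+1 by rewrite det3_rev.
have eBDE : det3 (p k.+3) (p k.+1) (p k) = - a k by rewrite det3_rev.
rewrite /corner_ratio_in /corner_ratio eABD eCDE eACD eBDE.
by rewrite mulrNN mulrN1 [a k.+1 * _]mulrC.
Qed.

Lemma T3_corners_unimodular X Y : T3_admissible X Y ->
  (forall k, corner_ratio_in X (p k) (p k.+1) (p k.+2) (p k.+3) (p k.+4) /\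
             corner_ratio_in Y (p k.+4) (p k.+3) (p k.+2) (p k.+1) (p k)) ->
  [/\ corner_ratio_in X (q 0) (q 1) (q 2) (q 3) (q 4),
      corner_ratio_in Y (q 4) (q 3) (q 2) (q 1) (q 0),
      det3 (q 0) (q 1) (q 2) != 0 &
      [/\ det3 (p 0) (p 1) (p 3) != 0, det3 (p 0) (p 1) (p 4) != 0,
          det3 (p 0) (p 3) (p 4) != 0 & det3 (p 1) (p 3) (p 4) != 0]].
Proof.
move=> [_ _ admissible] corners.
have hx k := proj1 (corner_ratio_in_unimodular_x X k) (proj1 (corners k)).
have hy k := proj1 (corner_ratio_in_unimodular_y Y k) (proj2 (corners k)).
have a_neq0 k : a k != 0 by case: (hx k).
have b_neq0 k : b k != 0.
  by case: (hx k) => _; rewrite mulf_eq0 negb_or => /andP[].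
have [||x0_neq1 y0_neq1 G_neq0 H_neq0 [T3xX T3yY]] := admissible (x_of a b) (y_of a b).
- by move=> k; case: (hx k).
- by move=> k; case: (hy k).
split.
- exact/corner_ratio_in_T3_unimodular/corner_ratio_in_rec_T3_x.
- exact/corner_ratio_in_T3_unimodular/corner_ratio_in_rec_T3_y.
- by rewrite det3_T3_unimodular det3_rec_T3_012_neq0.
split.
- exact: a_neq0.
- rewrite det3_unimodular det3_rec_seq_014.
  have -> : a 0 * a 1 + b 1 = a 0 * a 1 * (1 - y_of a b 0).
    by rewrite /y_of; field; rewrite !a_neq0.
  by rewrite !mulf_neq0 // subr_eq0 eq_sym.
- rewrite det3_unimodular det3_rec_seq_034.
  have -> : b 0 * b 1 - a 0 = b 0 * b 1 * (1 - x_of a b 0).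
    by rewrite /x_of; field; rewrite !b_neq0.
  by rewrite !mulf_neq0 // subr_eq0 eq_sym.
- by rewrite -oppr_eq0; exact: b_neq0.
Qed.

End Unimodular.

Section Rescaling.
Variable R : realType.
Variable D : nat -> R.
Hypothesis D_neq0 : forall m, D m != 0.

Fixpoint unimodular_scale (m : nat) : R :=
  match m with
  | 0 | 1 => 1
  | 2 => (D 0)^-1
  | ((m'.+1 as m1).+1).+1 => unimodular_scale m' * D m' / D m1
  end.

Lemma unimodular_scaleP m :
  unimodular_scale m * unimodular_scale m.+1 * unimodular_scale m.+2 * D m = 1.
Proof.
elim: m => [|m IH]; first by rewrite /= !mul1r mulVf.
rewrite [unimodular_scale m.+3]/= -[RHS]IH.
by field; rewrite D_neq0.
Qed.

Lemma unimodular_scale_neq0 m : unimodular_scale m != 0.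
Proof.
apply/eqP => l0; have /eqP := unimodular_scaleP m.
by rewrite l0 !mul0r eq_sym oner_eq0.
Qed.

End Rescaling.

Section Window.
Variable R : realType.
Notation vec := 'rV[R]_3.

Lemma T3_corners_seq X Y (p : nat -> vec) : T3_admissible X Y ->
  (forall m, consec_det p m != 0) ->
  (forall k, corner_ratio_in X (p k) (p k.+1) (p k.+2) (p k.+3) (p k.+4) /\
             corner_ratio_in Y (p k.+4) (p k.+3) (p k.+2) (p k.+1) (p k)) ->
  let q m := meet (line (p m) (p m.+3)) (line (p m.+1) (p m.+4)) in
  [/\ corner_ratio_in X (q 0) (q 1) (q 2) (q 3) (q 4),
      corner_ratio_in Y (q 4) (q 3) (q 2) (q 1) (q 0),
      det3 (q 0) (q 1) (q 2) != 0 &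
      [/\ det3 (p 0) (p 1) (p 3) != 0, det3 (p 0) (p 1) (p 4) != 0,
          det3 (p 0) (p 3) (p 4) != 0 & det3 (p 1) (p 3) (p 4) != 0]].
Proof.
move=> admissible p_nondeg corners q.
have := unimodular_scaleP p_nondeg; have := unimodular_scale_neq0 p_nondeg.
move: (unimodular_scale _) => l l_neq0 l_unimodular.
pose p' m := l m *: p m.
have p'_unimodular m : consec_det p' m = 1 by rewrite /consec_det /p' det3Z.
have corners' k : corner_ratio_in X (p' k) (p' k.+1) (p' k.+2) (p' k.+3) (p' k.+4) /\
                  corner_ratio_in Y (p' k.+4) (p' k.+3) (p' k.+2) (p' k.+1) (p' k).
  by rewrite /p' !corner_ratio_inZ.
pose c m := l m * l m.+3 * (l m.+1 * l m.+4).
have c_neq0 m : c m != 0 by rewrite /c !mulf_neq0.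
have q'E m : meet (line (p' m) (p' m.+3)) (line (p' m.+1) (p' m.+4)) = c m *: q m.
  by rewrite meet_lineZ.
have [] := T3_corners_unimodular p'_unimodular admissible corners'.
rewrite !q'E !corner_ratio_inZ // /p' !det3Z.
have neq0_mull (k x : R) : k * x != 0 -> x != 0 by rewrite mulf_eq0 negb_or => /andP[].
move=> cX cY /neq0_mull q012 [/neq0_mull p013 /neq0_mull p014 /neq0_mull p034 /neq0_mull p134].
by [].
Qed.

End Window.

Section Admissible.
Variable R : realType.
Implicit Types (u v w : R) (x y : nat -> R).

Lemma Hxy_splitl x y k : Hxy x y k = x k.+1 * Gxy x y k + (1 - x k) * Gxy x y k.+1.
Proof. by rewrite /Hxy /Gxy; ring. Qed.

Lemma Hxy_splitr x y k : Hxy x y k = y k.+1 * Gxy x y k.+1 + (1 - y k.+2) * Gxy x y k.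
Proof. by rewrite /Hxy /Gxy; ring. Qed.

Lemma ratio_in_Iint u w : u < 0 -> 0 < w -> u / w \in Iint R.
Proof. by move=> u_neg w_pos; rewrite in_itv /= pmulr_llt0 ?invr_gt0. Qed.

Lemma ratio_in_Jint u v : 0 < u -> 0 < v -> u / (u + v) \in Jint R.
Proof.
move=> u_pos v_pos; have uv_pos : 0 < u + v by rewrite addr_gt0.
by rewrite in_itv /= divr_gt0 //= ltr_pdivrMr // mul1r ltrDl.
Qed.

Lemma ratio_in_Kint u w : w < 0 -> u < w -> u / w \in Kint R.
Proof.
move=> w_neg u_lt_w; rewrite in_itv /= andbT -divrNN.
by rewrite ltr_pdivlMr ?oppr_gt0 // mul1r ltrN2.
Qed.

Lemma T3_admissible_IJ : T3_admissible (Iint R) (Jint R).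
Proof.
split; rewrite /Iint /Jint /Kint ?in_itv /= ?ltxx ?ltr10 // => x y hx hy.
have x_neg k : x k < 0 by move: (hx k); rewrite in_itv.
have [y_pos y_lt1] : (forall k, 0 < y k) /\ (forall k, y k < 1).
  by split=> k; move: (hy k); rewrite in_itv /= => /andP[].
have G_pos k : 0 < Gxy x y k by rewrite /Gxy; move: (x_neg k) (y_lt1 k.+1); lra.
have H_pos k : 0 < Hxy x y k.
  by rewrite /Hxy; move: (x_neg k) (x_neg k.+1) (y_pos k.+1) (y_lt1 k.+2); nra.
split=> [||k|k|].
- by rewrite lt_eqF // (lt_trans (x_neg 0)).
- by rewrite lt_eqF.
- by rewrite gt_eqF.
- by rewrite gt_eqF.
split; first by apply: ratio_in_Iint => //; rewrite nmulr_rlt0.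
by rewrite /T3y Hxy_splitr; apply: ratio_in_Jint; rewrite mulr_gt0 // subr_gt0.
Qed.

Lemma T3_admissible_KJ : T3_admissible (Kint R) (Jint R).
Proof.
split; rewrite /Iint /Jint /Kint ?in_itv /= ?ltxx ?ltr10 // => x y hx hy.
have x_gt1 k : 1 < x k by move: (hx k); rewrite in_itv /= andbT.
have [y_pos y_lt1] : (forall k, 0 < y k) /\ (forall k, y k < 1).
  by split=> k; move: (hy k); rewrite in_itv /= => /andP[].
have G_neg k : Gxy x y k < 0 by rewrite /Gxy; move: (x_gt1 k) (y_pos k.+1); lra.
have H_neg k : Hxy x y k < 0.
  by rewrite /Hxy; move: (x_gt1 k) (x_gt1 k.+1) (y_pos k.+1) (y_lt1 k.+2); nra.
split=> [||k|k|].
- by rewrite gt_eqF.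
- by rewrite lt_eqF.
- by rewrite lt_eqF.
- by rewrite lt_eqF.
split.
- apply: ratio_in_Kint => //.
  by rewrite Hxy_splitl ltrDl; move: (x_gt1 0) (G_neg 1); nra.
- rewrite /T3y Hxy_splitr -divrNN opprD.
  by apply: ratio_in_Jint; rewrite oppr_gt0 ?pmulr_rlt0 ?subr_gt0.
Qed.

Lemma T3_admissible_JI : T3_admissible (Jint R) (Iint R).
Proof.
split; rewrite /Iint /Jint /Kint ?in_itv /= ?ltxx ?ltr10 // => x y hx hy.
have [x_pos x_lt1] : (forall k, 0 < x k) /\ (forall k, x k < 1).
  by split=> k; move: (hx k); rewrite in_itv /= => /andP[].
have y_neg k : y k < 0 by move: (hy k); rewrite in_itv.
have G_pos k : 0 < Gxy x y k by rewrite /Gxy; move: (x_lt1 k) (y_neg k.+1); lra.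
have H_pos k : 0 < Hxy x y k.
  by rewrite /Hxy; move: (x_lt1 k) (x_pos k.+1) (y_neg k.+1) (y_neg k.+2); nra.
split=> [||k|k|].
- by rewrite lt_eqF.
- by rewrite lt_eqF // (lt_trans (y_neg 0)).
- by rewrite gt_eqF.
- by rewrite gt_eqF.
split.
- by rewrite /T3x Hxy_splitl; apply: ratio_in_Jint; rewrite mulr_gt0 // subr_gt0.
- by apply: ratio_in_Iint => //; rewrite nmulr_rlt0.
Qed.

Lemma T3_admissible_JK : T3_admissible (Jint R) (Kint R).
Proof.
split; rewrite /Iint /Jint /Kint ?in_itv /= ?ltxx ?ltr10 // => x y hx hy.
have [x_pos x_lt1] : (forall k, 0 < x k) /\ (forall k, x k < 1).
  by split=> k; move: (hx k); rewrite in_itv /= => /andP[].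
have y_gt1 k : 1 < y k by move: (hy k); rewrite in_itv /= andbT.
have G_neg k : Gxy x y k < 0 by rewrite /Gxy; move: (x_pos k) (y_gt1 k.+1); lra.
have H_neg k : Hxy x y k < 0.
  by rewrite /Hxy; move: (x_lt1 k) (x_pos k.+1) (y_gt1 k.+1) (y_gt1 k.+2); nra.
split=> [||k|k|].
- by rewrite lt_eqF.
- by rewrite gt_eqF.
- by rewrite lt_eqF.
- by rewrite lt_eqF.
split.
- rewrite /T3x Hxy_splitl -divrNN opprD.
  by apply: ratio_in_Jint; rewrite oppr_gt0 ?pmulr_rlt0 ?subr_gt0.
- apply: ratio_in_Kint => //.
  by rewrite Hxy_splitr ltrDl; move: (y_gt1 4) (G_neg 2); nra.
Qed.

End Admissible.

Section Twisted.
Variable R : realType.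
Notation vec := 'rV[R]_3.
Variables (X Y : interval R) (P : int -> vec).
Hypothesis admissible : T3_admissible X Y.
Hypothesis P_nondeg : forall j, noncollinear (P j) (P (j + 1)) (P (j + 2)).
Hypothesis P_corners : forall j, x_even_in X P j /\ x_odd_in Y P j.

Lemma T3_window (i : int) :
  let p m := P (i + m%:Z) in
  let t m := T3 P (i + m%:Z) in
  [/\ corner_ratio_in X (t 0) (t 1) (t 2) (t 3) (t 4),
      corner_ratio_in Y (t 4) (t 3) (t 2) (t 1) (t 0),
      det3 (t 0) (t 1) (t 2) != 0 &
      [/\ det3 (p 0) (p 1) (p 3) != 0, det3 (p 0) (p 1) (p 4) != 0,
          det3 (p 0) (p 3) (p 4) != 0 & det3 (p 1) (p 3) (p 4) != 0]].
Proof.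
move=> p t; have [X0 Y0 _] := admissible.
have pD (m d : nat) : P (i + m%:Z + d%:Z) = p (m + d)%N by rewrite /p PoszD addrA.
have p_nondeg m : consec_det p m != 0.
  by have := P_nondeg (i + m%:Z); rewrite (pD m 1) (pD m 2) addn1 addn2.
have tE m : t m = meet (line (p m) (p m.+3)) (line (p m.+1) (p m.+4)).
  by rewrite /t /T3 (pD m 1) (pD m 3) (pD m 4) addn1 addn3 addn4.
have corners k : corner_ratio_in X (p k) (p k.+1) (p k.+2) (p k.+3) (p k.+4) /\
                 corner_ratio_in Y (p k.+4) (p k.+3) (p k.+2) (p k.+1) (p k).
  pose j := i + k.+2%:Z.
  have ev : corner_in X (P (j - 2)) (P (j - 1)) (P j) (P (j + 1)) (P (j + 2)).
    exact: (proj1 (P_corners j)).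
  have od : corner_in Y (P (j + 2)) (P (j + 1)) (P j) (P (j - 1)) (P (j - 2)).
    exact: (proj2 (P_corners j)).
  have e0 : j - 2 = i + k%:Z by rewrite /j; lia.
  have e1 : j - 1 = i + k.+1%:Z by rewrite /j; lia.
  have e3 : j + 1 = i + k.+3%:Z by rewrite /j; lia.
  have e4 : j + 2 = i + k.+4%:Z by rewrite /j; lia.
  by rewrite e0 e1 e3 e4 !corner_inE // in ev od.
have := T3_corners_seq admissible p_nondeg corners.
by rewrite /= !tE.
Qed.

Lemma three_nice_of_corners : three_nice P.
Proof.
move=> i; have [_ _ _ [P013 P014 P034 P134]] := T3_window i.
by rewrite /= addr0 in P013 P014 P034.
Qed.

Lemma T3_nondeg j : noncollinear (T3 P j) (T3 P (j + 1)) (T3 P (j + 2)).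
Proof. by have [_ _ T012 _] := T3_window j; rewrite /= addr0 in T012. Qed.

Lemma T3_corners_in j : x_even_in X (T3 P) j /\ x_odd_in Y (T3 P) j.
Proof.
have [X0 Y0 _] := admissible.
have [ev od _ _] := T3_window (j - 2); rewrite /= in ev od.
have e0 : j - 2 + 0%:Z = j - 2 by lia.
have e1 : j - 2 + 1%:Z = j - 1 by lia.
have e2 : j - 2 + 2%:Z = j by lia.
have e3 : j - 2 + 3%:Z = j + 1 by lia.
have e4 : j - 2 + 4%:Z = j + 2 by lia.
by rewrite e0 e1 e2 e3 e4 -!corner_inE // in ev od.
Qed.

End Twisted.

Lemma T3_monodromy (R : realType) (n : nat) (M : 'M[R]_3) (P : int -> 'rV[R]_3) :
  M \in unitmx ->
  (forall i, exists c : R, c != 0 /\ P (i + n%:Z) = c *: (P i *m M)) ->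
  forall i, exists c : R, c != 0 /\ T3 P (i + n%:Z) = c *: (T3 P i *m M).
Proof.
move=> M_unit P_mono i.
have [c0 [c0_neq0 e0]] := P_mono i.
have [c1 [c1_neq0 e1]] := P_mono (i + 1).
have [c3 [c3_neq0 e3]] := P_mono (i + 3).
have [c4 [c4_neq0 e4]] := P_mono (i + 4).
have detM_neq0 : \det M != 0 by rewrite -unitfE -unitmxE.
exists (c0 * c3 * (c1 * c4) * \det M); split; first by do !apply: mulf_neq0.
rewrite /T3 !(addrAC i n%:Z) e0 e1 e3 e4.
by rewrite meet_lineZ meet_line_mulmx scalerA.
Qed.

Lemma T3_preserves_of_admissible (R : realType) (n : nat) (X Y : interval R) :
  T3_admissible X Y -> T3_preserves n X Y.
Proof.
move=> admissible M P [M_unit [P_nondeg P_mono]] [_ P_corners].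
have T3_twisted : twisted_ngon n M (T3 P).
  split=> //; split; first exact: T3_nondeg admissible P_nondeg P_corners.
  exact: T3_monodromy.
split; first exact: three_nice_of_corners admissible P_nondeg P_corners.
split=> //; split; first by exists M.
exact: T3_corners_in admissible P_nondeg P_corners.
Qed.

Theorem mainTheorem10 (R : realType) (n : nat) : (2 <= n)%N ->
  [/\ T3_preserves n (Iint R) (Jint R),
      T3_preserves n (Kint R) (Jint R),
      T3_preserves n (Jint R) (Iint R) &
      T3_preserves n (Jint R) (Kint R)].
Proof.
move=> _; split; apply: T3_preserves_of_admissible.
- exact: T3_admissible_IJ.
- exact: T3_admissible_KJ.
- exact: T3_admissible_JI.
- exact: T3_admissible_JK.
Qed.
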